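(* Assume every node of $G$ belongs to at least one $h$-clique. Let $f^*$ be any maximum flow in $\mathcal{H}$. Then in the residual graph $\mathcal{H}_{f^*}$ there is a directed path from $t$ to every node $\lambda\in\Lambda$.
   Context: Let $G=(V,E)$ be a finite simple undirected graph and $h\ge2$. An $h$-clique is a set of $h$ pairwise adjacent nodes; $\mu_h(G[W])$ counts $h$-cliques inside $W$; for nonempty $W$, $\rho_h(W)=\mu_h(G[W])/|W|$; $\rho_h^*=\max_{\emptyset\ne W\subseteq V}\rho_h(W)$; $deg_G(v,h)$ is the number of $h$-cliques containing $v$; $\Lambda$ is the set of $(h-1)$-cliques of $G$ contained in some $h$-clique. Flow network $\mathcal{H}=(V_\mathcal{H},E_\mathcal{H},c)$: $V_\mathcal{H}=V\cup\Lambda\cup\{s,t\}$; for $v\in V$: arcs $(s,v)$ cap. $deg_G(v,h)$, $(v,t)$ cap. $h\rho_h^*$, $(v,s),(t,v)$ cap. $0$; for $\lambda\in\Lambda$, $v\in\lambda$: $(\lambda,v)$ cap. $+\infty$, $(v,\lambda)$ cap. $0$; for $\lambda\in\Lambda$, $v\in V$ with $\lambda\cup\{v\}$ an $h$-clique: $(v,\lambda)$ cap. $1$, $(\lambda,v)$ cap. $0$; no other arcs. A flow $f$ satisfies $f(u,v)\le c(u,v)$, $f(v,u)=-f(u,v)$, conservation at nodes other than $s,t$; value $\sum_v f(s,v)$. The residual graph $\mathcal{H}_{f}$ has an arc $(u,v)$ whenever $(u,v)\in E_\mathcal{H}$ and $c(u,v)-f(u,v)>0$. *)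

From mathcomp Require Import all_boot all_order all_algebra.
Set Implicit Arguments. Unset Strict Implicit. Unset Printing Implicit Defensive.
Import Order.TTheory GRing.Theory Num.Theory.
Local Open Scope ring_scope.

Section CliqueFlow.
Variable V : finType.
Variable e : rel V.
Variable h : nat.
Variable R : realFieldType.

Definition is_clique (W : {set V}) : bool :=
  [forall x in W, forall y in W, (x != y) ==> e x y].

Definition hclique (W : {set V}) : bool := is_clique W && (#|W| == h)%N.

Definition mu_h (W : {set V}) : nat := #|[set K : {set V} | hclique K & K \subset W]|.

Definition rho_h (W : {set V}) : R := (mu_h W)%:R / (#|W|)%:R.

(* rho_h^* = max over nonempty W of rho_h(W) (all values are >= 0) *)
Definition rho_star : R := \big[Num.max/0]_(W : {set V} | W != set0) rho_h W.

Definition deg_h (v : V) : nat := #|[set K : {set V} | hclique K & v \in K]|.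

Definition Lambda : {set {set V}} :=
  [set L : {set V} | [&& is_clique L, (#|L| == h.-1)%N &
                        [exists K : {set V}, hclique K && (L \subset K)]]].

(* Nodes of the flow network: inl true = s, inl false = t,
   inr (inl v) = graph node v, inr (inr L) = set node L (meant to range over Lambda). *)
Definition node : finType := (bool + (V + {set V}))%type.
Definition src : node := inl true.
Definition snk : node := inl false.
Definition vnode (v : V) : node := inr (inl v).
Definition lnode (L : {set V}) : node := inr (inr L).

Definition lv_adj (L : {set V}) (v : V) : bool :=
  (L \in Lambda) && ((v \in L) || hclique (v |: L)).

(* E_H : the arcs of the network (including the capacity-0 reverse arcs) *)
Definition arcH (u w : node) : bool :=
  match u, w with
  | inl true, inr (inl _) => true
  | inr (inl _), inl true => true
  | inr (inl _), inl false => true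
  | inl false, inr (inl _) => true
  | inr (inr L), inr (inl v) => lv_adj L v
  | inr (inl v), inr (inr L) => lv_adj L v
  | _, _ => false
  end.

(* capacities: None = +infinity; non-arcs get capacity 0 *)
Definition capH (u w : node) : option R :=
  match u, w with
  | inl true, inr (inl v) => Some (deg_h v)%:R
  | inr (inl _), inl true => Some 0
  | inr (inl _), inl false => Some (h%:R * rho_star)
  | inl false, inr (inl _) => Some 0
  | inr (inr L), inr (inl v) =>
      if lv_adj L v && (v \in L) then None else Some 0
  | inr (inl v), inr (inr L) =>
      if lv_adj L v && (v \notin L) then Some 1 else Some 0
  | _, _ => Some 0
  end.

Definition le_cap (x : R) (c : option R) : bool :=
  match c with None => true | Some c => x <= c end.

Definition lt_cap (x : R) (c : option R) : bool :=
  match c with None => true | Some c => x < c end.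

Definition is_flow (f : node -> node -> R) : Prop :=
  [/\ (forall u w, le_cap (f u w) (capH u w)),
      (forall u w, f w u = - f u w) &
      (forall u, u != src -> u != snk -> \sum_(w : node) f u w = 0)].

Definition flow_value (f : node -> node -> R) : R := \sum_(w : node) f src w.

Definition is_max_flow (f : node -> node -> R) : Prop :=
  is_flow f /\ (forall g, is_flow g -> flow_value g <= flow_value f).

Definition residual (f : node -> node -> R) : rel node :=
  fun u w => arcH u w && lt_cap (f u w) (capH u w).

End CliqueFlow.

(** Let A be the set of nodes not reachable from t in the
    residual graph, and suppose some λ = L ∈ A.  Every arc from the complement
    of A into A is saturated, so every flow value f(x,y) with x ∈ A, y ∉ A is
    nonpositive, and by antisymmetry the net flow out of A is the sum of these
    values.  If s ∉ A, conservation makes the net flow out of A equal to 0,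
    while the node u completing L to an h-clique gives a saturated arc into A
    of capacity at least 1 (the arc (u,λ) if u ∉ A, else (s,u)): contradiction.
    If s ∈ A, the net flow out of A is the value of f, which is then ≤ 0; but
    routing one unit s → u → t is a flow of value 1, since h ρ*_h ≥ 1. *)

From mathcomp Require Import all_boot all_order all_algebra.
From mathcomp Require Import lra zify.
Set Implicit Arguments. Unset Strict Implicit.
Import Order.TTheory GRing.Theory Num.Theory.
Local Open Scope ring_scope.

Section Cuts.
Variables (T : finType) (R : realDomainType).

Lemma sum_le_term (P : pred T) (F : T -> R) i0 :
  (forall i, P i -> F i <= 0) -> P i0 -> \sum_(i | P i) F i <= F i0.
Proof.
move=> F_le0 Pi0; rewrite (bigD1 i0) //= -[leRHS]addr0 lerD2l.
by apply: sumr_le0 => i /andP[/F_le0].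
Qed.

Variables (f : T -> T -> R) (f_anti : forall x y, f y x = - f x y).

Lemma sum_antisym_within (A : pred T) : \sum_(x | A x) \sum_(y | A y) f x y = 0.
Proof.
set S := (X in X = 0); suff : S = - S by lra.
rewrite {1}/S exchange_big -sumrN; apply: eq_bigr => x _.
by rewrite -sumrN; apply: eq_bigr => y _; rewrite f_anti.
Qed.

Lemma net_out_cut (A : pred T) :
  \sum_(x | A x) \sum_y f x y = \sum_(x | A x) \sum_(y | ~~ A y) f x y.
Proof.
rewrite (eq_bigr _ (fun x _ => bigID A _ (f x))) big_split /=.
by rewrite sum_antisym_within add0r.
Qed.

Lemma net_out_le_cut_term (A : pred T) x0 y0 :
  (forall x y, A x -> ~~ A y -> f x y <= 0) -> A x0 -> ~~ A y0 ->
  \sum_(x | A x) \sum_y f x y <= f x0 y0.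
Proof.
move=> cut_le0 Ax0 Ny0; rewrite net_out_cut.
apply: le_trans (@sum_le_term (predC A) (f x0) y0 (cut_le0 x0 ^~ Ax0) Ny0).
by apply: sum_le_term Ax0 => x Ax; apply: sumr_le0 => y; apply: cut_le0.
Qed.

End Cuts.

Section Network.
Variables (V : finType) (e : rel V) (h : nat) (R : realFieldType).

Local Notation node := (node V).
Local Notation src := (src V).
Local Notation snk := (snk V).
Local Notation arcH := (arcH e h).
Local Notation capH := (capH e h R).
Local Notation is_flow := (is_flow e h (R := R)).

Lemma arcH_sym (x y : node) : arcH x y = arcH y x.
Proof. by case: x => [[]|[v|L]]; case: y => [[]|[w|M]]. Qed.

Lemma capH_nonarc (x y : node) : ~~ arcH x y -> capH x y = Some 0.
Proof. by case: x => [[]|[v|L]]; case: y => [[]|[w|M]] //= /negbTE ->. Qed.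

Lemma rho_star_ge0 : 0 <= rho_star e h R.
Proof. exact: bigmax_ge_id. Qed.

Lemma capH_ge0 (x y : node) : le_cap 0 (capH x y).
Proof.
case: x => [[]|[v|L]]; case: y => [[]|[w|M]] //=; try case: ifP => _ //=;
  by rewrite ?ler0n ?ler01 ?mulr_ge0 ?rho_star_ge0.
Qed.

Lemma hclique_card (K : {set V}) : hclique e h K -> #|K| = h.
Proof. by case/andP=> _ /eqP. Qed.

Lemma deg_h_gt0 (K : {set V}) u : hclique e h K -> u \in K -> (0 < deg_h e h u)%N.
Proof. by move=> hK uK; apply/card_gt0P; exists K; rewrite inE hK uK. Qed.

Lemma one_le_h_rho_star (K : {set V}) :
  hclique e h K -> (0 < h)%N -> 1 <= h%:R * rho_star e h R.
Proof.
move=> hK h_gt0; have K_neq0 : K != set0.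
  by apply: contraTneq h_gt0 => K0; rewrite -(hclique_card hK) K0 cards0.
have rho_le : rho_h e h R K <= rho_star e h R by apply: (le_bigmax_cond (T := R)).
apply: le_trans (ler_wpM2l (ler0n R h) rho_le).
have mu_ge1 : (1 <= mu_h e h K)%N by apply/card_gt0P; exists K; rewrite inE hK subxx.
rewrite /rho_h (hclique_card hK) mulrC divfK ?ler1n // pnatr_eq0 -lt0n //.
Qed.

Definition unit_arc (a b x y : node) : R := ((x == a) && (y == b))%:R.

Lemma sum_unit_arc (a b x : node) : \sum_y unit_arc a b x y = (x == a)%:R.
Proof.
rewrite /unit_arc; case: (x == a); last by rewrite big1.
by rewrite (bigD1 b) //= eqxx big1 ?addr0 // => y /negbTE ->.
Qed.

Lemma unit_arcC (a b x y : node) : unit_arc a b y x = unit_arc b a x y.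
Proof. by rewrite /unit_arc andbC. Qed.

Definition path_flow (u : V) (x y : node) : R :=
  unit_arc src (vnode u) x y - unit_arc (vnode u) src x y
  + unit_arc (vnode u) snk x y - unit_arc snk (vnode u) x y.

Lemma path_flow_le_cap u x y :
  (1 <= deg_h e h u)%N -> 1 <= h%:R * rho_star e h R ->
  le_cap (path_flow u x y) (capH x y).
Proof.
move=> deg_ge1 cap_ut_ge1; rewrite /path_flow /unit_arc.
case: x => [[]|[v|L]]; case: y => [[]|[w|M]]; rewrite /= ?andbF ?andbT /=.
all: rewrite ?subrr ?addr0 ?sub0r ?add0r ?subr0 ?oppr0; try case: ifP => _ /=.
all: try by [].
all: rewrite /vnode ?(inj_eq (@inr_inj _ _)) ?(inj_eq (@inl_inj _ _)).
all: case: eqP => [wu|_]; rewrite ?wu ?lerN10 ?oppr0 ?ler1n ?ler0n //.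
by rewrite mulr_ge0 ?rho_star_ge0.
Qed.

Lemma path_flow_is_flow u :
  (1 <= deg_h e h u)%N -> 1 <= h%:R * rho_star e h R -> is_flow (path_flow u).
Proof.
move=> deg_ge1 cap_ut_ge1; split=> [x y | x y | x x_src x_snk].
- exact: path_flow_le_cap.
- by rewrite /path_flow !(unit_arcC _ _ x y); lra.
- rewrite /path_flow sumrB big_split /= sumrB !sum_unit_arc.
  by rewrite (negbTE x_src) (negbTE x_snk); lra.
Qed.

Lemma path_flow_value u : flow_value (path_flow u) = 1.
Proof. by rewrite /flow_value /path_flow sumrB big_split /= sumrB !sum_unit_arc /=; lra. Qed.

Lemma max_flow_value_ge1 (f : node -> node -> R) (K : {set V}) u :
  is_max_flow e h f -> hclique e h K -> u \in K -> (0 < h)%N -> 1 <= flow_value f.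
Proof.
move=> [_ f_max] hK uK h_gt0.
rewrite -(path_flow_value u); apply/f_max/path_flow_is_flow.
  exact: deg_h_gt0 hK uK.
exact: one_le_h_rho_star hK h_gt0.
Qed.

Lemma net_out_sink_free (f : node -> node -> R) (A : pred node) :
  is_flow f -> ~~ A snk ->
  \sum_(x | A x) \sum_y f x y = if A src then flow_value f else 0.
Proof.
case=> _ _ f_cons Nsnk; have cons x : A x -> x != src -> \sum_y f x y = 0.
  by move=> Ax x_src; apply: f_cons x_src _; apply: contraNneq Nsnk => <-.
case: ifP => Asrc.
  by rewrite (bigD1 src) //= [X in _ + X]big1 ?addr0 // => x /andP[]; exact: cons.
apply: big1 => x Ax; apply: cons => //.
by apply: contraFneq Asrc => <-.
Qed.

Lemma Lambda_completion (L : {set V}) : (0 < h)%N -> L \in Lambda e h ->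
  exists2 K, hclique e h K & exists2 u, u \notin L & K = u |: L.
Proof.
move=> h_gt0; rewrite inE => /and3P[_ /eqP cardL /existsP[K /andP[hK LK]]].
have cardK := hclique_card hK.
have [u uK uL] : exists2 u, u \in K & u \notin L.
  by apply/subsetPn; apply: contraTN isT => KL; have := subset_leq_card KL; lia.
exists K => //; exists u => //; apply/eqP.
by rewrite eq_sym eqEcard subUset sub1set uK LK cardsU1 uL cardL cardK; lia.
Qed.

Section Residual.
Variables (f : node -> node -> R) (f_flow : is_flow f).

Local Notation reached := (connect (residual e h f) snk).

Lemma residual_boundary_saturated (x y : node) :
  reached y -> ~~ reached x -> arcH y x -> ~~ lt_cap (f y x) (capH y x).
Proof.
move=> Ry Nx a; apply: contra Nx => lt.
by apply: connect_trans Ry (connect1 _); rewrite /residual a lt.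
Qed.

Lemma flow_into_reached_le0 (x y : node) : ~~ reached x -> reached y -> f x y <= 0.
Proof.
case: f_flow => f_cap f_anti _ Nx Ry; rewrite f_anti oppr_le0.
have [a|Na] := boolP (arcH y x).
  move: (residual_boundary_saturated Ry Nx a) (capH_ge0 y x).
  by case: (capH y x) => [c|] //=; rewrite -leNgt => /[swap]; apply: le_trans.
have := f_cap x y; rewrite capH_nonarc /= 1?f_anti ?oppr_le0 //.
by rewrite arcH_sym.
Qed.

Lemma saturated_unit_arc_into_unreached (L K : {set V}) u :
  reached src -> ~~ reached (lnode L) -> L \in Lambda e h ->
  hclique e h K -> u \notin L -> K = u |: L ->
  exists x0 y0, [/\ ~~ reached x0, reached y0 & f x0 y0 <= -1].
Proof.
case: f_flow => _ f_anti _ Rsrc NL LL hK uL defK.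
have [Ru | Nu] := boolP (reached (vnode u)).
  exists (lnode L), (vnode u); split=> //.
  have adj : lv_adj e h L u by rewrite /lv_adj LL -defK hK orbT.
  have := residual_boundary_saturated Ru NL.
  by rewrite /= adj uL /= -leNgt => /(_ isT) one_le; rewrite f_anti; lra.
exists (vnode u), src; split=> //.
have := residual_boundary_saturated Rsrc Nu isT.
rewrite /= -leNgt => deg_le; rewrite f_anti.
have uK : u \in K by rewrite defK setU11.
have : 1 <= (deg_h e h u)%:R :> R by rewrite ler1n (deg_h_gt0 hK uK).
lra.
Qed.

End Residual.

End Network.

Theorem lemma6 (V : finType) (e : rel V) (h : nat) (R : realFieldType)
  (e_sym : symmetric e) (e_irr : irreflexive e) (h_ge2 : (2 <= h)%N)
  (cover : forall v : V, exists K : {set V}, hclique e h K && (v \in K))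
  (f : node V -> node V -> R) (fmax : is_max_flow e h f) :
  forall L : {set V}, L \in Lambda e h ->
    connect (residual e h f) (snk V) (lnode L).
Proof.
move=> L LL; apply: contraT => NL.
have h_gt0 : (0 < h)%N by apply: leq_trans h_ge2.
have [K hK [u uL defK]] := Lambda_completion h_gt0 LL.
have uK : u \in K by rewrite defK setU11.
have f_flow := fmax.1; have [_ f_anti _] := f_flow.
set reached := connect (residual e h f) (snk V).
pose A := [pred x | ~~ reached x].
have Nsnk : ~~ A (snk V) by rewrite /= negbK; exact: connect0.
have cut_le0 x y : A x -> ~~ A y -> f x y <= 0.
  by rewrite /= negbK; exact: flow_into_reached_le0.
have net_out := net_out_sink_free f_flow Nsnk.
have [Asrc | Nsrc] := boolP (A (src V)).
  have := net_out_le_cut_term f_anti cut_le0 Asrc Nsnk.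
  rewrite net_out Asrc => /le_trans/(_ (cut_le0 _ _ Asrc Nsnk)).
  by have := max_flow_value_ge1 fmax hK uK h_gt0; lra.
have [x0 [y0 [Ax0 Ry0 f_le]]] :=
  saturated_unit_arc_into_unreached f_flow (negbNE Nsrc) NL LL hK uL defK.
have Ny0 : ~~ A y0 by rewrite /= negbK.
have := net_out_le_cut_term f_anti cut_le0 Ax0 Ny0.
by rewrite net_out (negbTE Nsrc); lra.
Qed.
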